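(* Let $R$ be a ring such that for every $x\in R$ there exists an integer $n=n(x)\ge 2$ with $xRx=x^{n}Rx^{n}$. Then $R$ is feckly clean.
   Context: Rings are associative with identity, not necessarily commutative; $J(R)$ is the Jacobson radical. An element $u\in R$ is full if $RuR=R$. An element $a\in R$ is feckly clean if there exist $e\in R$ and a full element $u\in R$ with $a=e+u$ and $eR(1-e)\subseteq J(R)$; $R$ is feckly clean if every element is feckly clean. *)

From HB Require Import structures.
From mathcomp Require Import all_boot all_order all_algebra.
Set Implicit Arguments. Unset Strict Implicit. Unset Printing Implicit Defensive.
Import GRing.Theory.
Local Open Scope ring_scope.

Definition left_ideal (R : pzRingType) (I : R -> Prop) : Prop :=
  I 0 /\ (forall x y, I x -> I y -> I (x + y)) /\
  (forall r x, I x -> I (r * x)).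

Definition maximal_left_ideal (R : pzRingType) (I : R -> Prop) : Prop :=
  left_ideal I /\ ~ I 1 /\
  (forall K : R -> Prop, left_ideal K -> ~ K 1 ->
     (forall x, I x -> K x) -> forall x, K x -> I x).

Definition jacobson (R : pzRingType) (x : R) : Prop :=
  forall I : R -> Prop, maximal_left_ideal I -> I x.

(* Two-sided ideal generated by u: finite sums of elements a * u * b. *)
Definition in_RuR (R : pzRingType) (u y : R) : Prop :=
  exists (n : nat) (a b : 'I_n -> R), y = \sum_(i < n) a i * u * b i.

Definition full (R : pzRingType) (u : R) : Prop := forall y : R, in_RuR u y.

Definition feckly_clean_elt (R : pzRingType) (a : R) : Prop :=
  exists e u : R, a = e + u /\ full u /\
    (forall r : R, jacobson (e * r * (1 - e))).

Definition feckly_clean (R : pzRingType) : Prop :=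
  forall a : R, feckly_clean_elt a.

Definition in_xRy (R : pzRingType) (x y z : R) : Prop :=
  exists r : R, z = x * r * y.

(* Two consequences of [xRx = x^n R x^n] drive the proof: an element [w] with
   [w^2 = 0] has [w^n = 0], hence [wRw = 0]; and [a^2] lies in [a^2 R a^2], so
   [f = a^2 s] is an idempotent with [f a^2 = a^2].  Put [e = 1 - f].  Then
   [eR(1-e) = eRf] consists of square-zero elements, which lie in [J(R)] since
   they annihilate [R] from both sides.  For [u = a - e], the corner element
   [e a e] is nilpotent, so [e u e = e a e - e] is a unit of [eRe] and [e] lies
   in [RuR]; then so do [a = u + e], [1 - e = a (a s)] and finally [1]. *)

From HB Require Import structures.
From mathcomp Require Import all_boot all_order all_algebra.
From Stdlib Require Import Classical.
Import GRing.Theory.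
Local Open Scope ring_scope.

Set Implicit Arguments.
Unset Strict Implicit.

Section TwoSidedIdeal.
Variable R : pzRingType.

Lemma in_RuR_mul (u c y d : R) : in_RuR u y -> in_RuR u (c * y * d).
Proof.
move=> [n [A [B ->]]]; exists n, (fun i => c * A i), (fun i => B i * d).
by rewrite mulr_sumr mulr_suml; apply: eq_bigr => i _; rewrite !mulrA.
Qed.

Lemma in_RuR_add (u y1 y2 : R) :
  in_RuR u y1 -> in_RuR u y2 -> in_RuR u (y1 + y2).
Proof.
move=> [n [A [B ->]]] [m [C [D ->]]].
exists (n + m)%N, (fun i => match split i with inl j => A j | inr k => C k end),
  (fun i => match split i with inl j => B j | inr k => D k end).
rewrite big_split_ord /=; congr (_ + _); apply: eq_bigr => i _.
- by rewrite (unsplitK (inl i)).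
- by rewrite (unsplitK (inr i)).
Qed.

Lemma in_RuR_sandwich (u a b : R) : in_RuR u (a * u * b).
Proof. by exists 1%N, (fun _ => a), (fun _ => b); rewrite big_ord1. Qed.

Lemma in_RuR_id (u : R) : in_RuR u u.
Proof. by have := in_RuR_sandwich u 1 1; rewrite mul1r mulr1. Qed.

Lemma full_in_RuR1 (u : R) : in_RuR u 1 -> full u.
Proof. by move=> u1 y; have := in_RuR_mul 1 y u1; rewrite !mul1r. Qed.

End TwoSidedIdeal.

(* If [w] escaped a maximal left ideal [M], then [M + Rw] would contain [1 = m + t w];
   but [(t w)^2 = 0], so [1 = (1 + t w) m] already lies in [M]. *)
Lemma jacobson_wRw0 (R : pzRingType) (w : R) :
  (forall t, w * t * w = 0) -> jacobson w.
Proof.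
move=> wRw0 M [[M0 [MD ML]] [M1 Mmax]].
pose K y := exists m t, M m /\ y = m + t * w.
have K_ideal : left_ideal K.
  split; first by exists 0, 0; rewrite mul0r addr0.
  split=> [y1 y2 [m1 [t1 [Mm1 ->]]] [m2 [t2 [Mm2 ->]]] | r y [m [t [Mm ->]]]].
  - by exists (m1 + m2), (t1 + t2); rewrite mulrDl addrACA; split=> //; apply: MD.
  - by exists (r * m), (r * t); rewrite mulrDr mulrA; split=> //; apply: ML.
have [[m [t [Mm def1]]] | K1] := classic (K 1).
  have tw2 : t * w * (t * w) = 0 by rewrite -!mulrA (mulrA w) wRw0 !mulr0.
  have def_m : m = 1 - t * w by rewrite def1 addrK.
  exfalso; apply: M1; suff -> : 1 = (1 + t * w) * m by apply: ML.
  by rewrite def_m mulrBr mulr1 mulrDl mul1r tw2 addr0 addrK.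
apply: (Mmax K K_ideal K1) => [y My|]; first by exists y, 0; rewrite mul0r addr0.
by exists 0, 1; rewrite mul1r add0r.
Qed.

Definition sqr0_wRw0 (R : pzRingType) : Prop :=
  forall w : R, w * w = 0 -> forall t, w * t * w = 0.

Section CornerUnit.
Variable R : pzRingType.
Implicit Types x e s : R.

(* [e - exe] is a unit of the corner ring [eRe], with inverse [e + m + ... + m^k]
   for [m = exe], and [e(x - e)e = -(e - exe)]. *)
Lemma idempotent_in_RuR_sub x e (k : nat) :
  e * e = e -> (e * x * e) ^+ k = 0 -> in_RuR (x - e) e.
Proof.
move=> ee mk0; set m := e * x * e in mk0 *.
have emX n : e * m ^+ n.+1 = m ^+ n.+1 by rewrite exprS mulrA /m !mulrA ee.
have me : m * e = m by rewrite /m -!mulrA ee.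
have Einv j : (e - m) * (e + \sum_(i < j) m ^+ i.+1) = e - m ^+ j.+1.
  elim: j => [|j IHj]; first by rewrite big_ord0 addr0 mulrBl ee me.
  by rewrite big_ord_recr /= addrA mulrDr IHj mulrBl emX -exprS addrA subrK.
pose inv := e + \sum_(i < k) m ^+ i.+1.
suff {2}<- : (- e) * (x - e) * (e * inv) = e by apply: in_RuR_sandwich.
rewrite mulrA !mulNr mulrBr mulrBl !ee -mulNr opprB -/m.
by rewrite Einv exprSr mk0 mul0r subr0.
Qed.

Hypothesis sqr0_R : sqr0_wRw0 R.

(* With [z = ex(1 - e)] square-zero, [(exe)^2 = -z(xe)] and [(z(xe))^2 = (z(xe)z)xe = 0]. *)
Lemma corner_nilpotent x e :
  e * e = e -> e * (x * x) = 0 -> (e * x * e) ^+ 4 = 0.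
Proof.
move=> ee ex2; set m := e * x * e; set z := e * x * (1 - e).
have ee' : (1 - e) * e = 0 by rewrite mulrBl mul1r ee subrr.
have z2 : z * z = 0 by rewrite /z !mulrA -(mulrA (e * x) (1 - e) e) ee' mulr0 !mul0r.
have m2 : m * m = - (z * (x * e)).
  have exxe : e * x * x * e = 0 by rewrite -(mulrA e) ex2 mul0r.
  rewrite /m /z !mulrA -(mulrA (e * x) e e) ee.
  by rewrite mulrBr mulr1 !mulrBl exxe sub0r opprK.
rewrite -[4%N]/(2 * 2)%N exprM !expr2 m2 mulrNN mulrA.
by rewrite (sqr0_R z2) mul0r.
Qed.

Lemma full_sub_idempotent x e s :
  e * e = e -> e * (x * x) = 0 -> 1 - e = x * x * s -> full (x - e).
Proof.
move=> ee ex2 def1e.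
have RuRe : in_RuR (x - e) e := idempotent_in_RuR_sub ee (corner_nilpotent ee ex2).
have RuRx : in_RuR (x - e) x.
  by rewrite -[X in in_RuR _ X](subrK e x); apply: in_RuR_add (in_RuR_id _) RuRe.
have RuR1e : in_RuR (x - e) (1 - e) by rewrite def1e; apply: in_RuR_mul.
by apply: full_in_RuR1; rewrite -(subrK e 1); apply: in_RuR_add.
Qed.

End CornerUnit.

Lemma feckly_clean_elt_regular_sqr (R : pzRingType) (a s : R) :
  sqr0_wRw0 R -> a * a = a * a * s * (a * a) -> feckly_clean_elt a.
Proof.
move=> sqr0_R a2_regular; set f := a * a * s.
have ff : f * f = f by rewrite /f mulrA -a2_regular.
have fa2 : f * (a * a) = a * a by rewrite /f -a2_regular.
have f1f : f * (1 - f) = 0 by rewrite mulrBr mulr1 ff subrr.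
have one_sub_f : 1 - (1 - f) = f by rewrite opprB addrC subrK.
have def_f : f = a * a * s by [].
clearbody f.
exists (1 - f), (a - (1 - f)); split; first by rewrite addrC subrK.
split.
  apply: (full_sub_idempotent sqr0_R (s := s)).
  - by rewrite mulrBr mulr1 mulrBl mul1r ff subrr subr0.
  - by rewrite mulrBl mul1r fa2 subrr.
  - by rewrite one_sub_f def_f.
move=> t; apply: jacobson_wRw0; apply: sqr0_R.
by rewrite one_sub_f !mulrA -(mulrA ((1 - f) * t) f (1 - f)) f1f mulr0 !mul0r.
Qed.

Definition xRx_expr_stable (R : pzRingType) (x : R) (n : nat) : Prop :=
  forall z : R, in_xRy x x z <-> in_xRy (x ^+ n) (x ^+ n) z.

Section ExprStable.
Variables (R : pzRingType) (n : nat).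
Hypothesis n_ge2 : (2 <= n)%N.

Lemma xRx_expr_stable_wRw0 (w : R) :
  xRx_expr_stable w n -> w * w = 0 -> forall t, w * t * w = 0.
Proof.
move=> wRw w2 t; have [r ->] := (wRw _).1 (ex_intro _ t erefl).
by rewrite -(subnK n_ge2) exprD expr2 w2 !mulr0.
Qed.

Lemma xRx_expr_stable_regular_sqr (a : R) :
  xRx_expr_stable a n -> exists s, a * a = a * a * s * (a * a).
Proof.
move=> aRa; have [r def_a2] : in_xRy (a ^+ n) (a ^+ n) (a * a).
  by apply/aRa; exists 1; rewrite mulr1.
exists (a ^+ (n - 2) * r * a ^+ (n - 2)).
have Enl : a ^+ n = a * a * a ^+ (n - 2) by rewrite -expr2 -exprD subnKC.
have Enr : a ^+ n = a ^+ (n - 2) * (a * a) by rewrite -expr2 -exprD subnK.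
by rewrite {1}def_a2 {1}Enl Enr !mulrA.
Qed.

End ExprStable.

Theorem corollary4p2 (R : pzRingType) :
  (forall x : R, exists n : nat, (2 <= n)%N /\
     (forall z : R, in_xRy x x z <-> in_xRy (x ^+ n) (x ^+ n) z)) ->
  feckly_clean R.
Proof.
move=> expr_stable.
have sqr0_R : sqr0_wRw0 R.
  move=> w; have [n [n_ge2 wRw]] := expr_stable w.
  exact: (xRx_expr_stable_wRw0 n_ge2 wRw).
move=> a; have [n [n_ge2 aRa]] := expr_stable a.
have [s a2_regular] := xRx_expr_stable_regular_sqr n_ge2 aRa.
exact: feckly_clean_elt_regular_sqr sqr0_R a2_regular.
Qed.
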